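(* For every intuitionistic conditional nested sequent $\Gamma$: if $\Gamma$ is derivable in the nested calculus $\mathsf{N.IntCK}$, then its formula interpretation $i(\Gamma)$ is derivable in the Hilbert system $\mathsf{IntCK}$.
   Context: Language $\mathcal{L}$: formulas $\varphi ::= p \mid \bot \mid \varphi\wedge\varphi \mid \varphi\vee\varphi \mid \varphi\to\varphi \mid \varphi \mathrel{\Box\!\!\to} \varphi \mid \varphi \mathrel{\Diamond\!\!\to}\varphi$ ($p$ ranging over a countable set of atoms); $\neg\varphi:=\varphi\to\bot$, $\top:=\neg\bot$, $\varphi\leftrightarrow\psi := (\varphi\to\psi)\wedge(\psi\to\varphi)$. Hilbert system $\mathsf{IntCK}$: any axiomatisation of intuitionistic propositional logic in $\mathcal{L}$ with modus ponens, plus the rules RA$_\Box$: from $\varphi\leftrightarrow\rho$ infer $(\varphi\mathrel{\Box\!\!\to}\psi)\leftrightarrow(\rho\mathrel{\Box\!\!\to}\psi)$; RC$_\Box$: from $\psi\leftrightarrow\chi$ infer $(\varphi\mathrel{\Box\!\!\to}\psi)\leftrightarrow(\varphi\mathrel{\Box\!\!\to}\chi)$; RA$_\Diamond$, RC$_\Diamond$: the same with $\mathrel{\Diamond\!\!\to}$; and axioms CM$_\Box$: $(\varphi\mathrel{\Box\!\!\to}\psi\wedge\chi)\to(\varphi\mathrel{\Box\!\!\to}\psi)\wedge(\varphi\mathrel{\Box\!\!\to}\chi)$; CC$_\Box$: $(\varphi\mathrel{\Box\!\!\to}\psi)\wedge(\varphi\mathrel{\Box\!\!\to}\chi)\to(\varphi\mathrel{\Box\!\!\to}\psi\wedge\chi)$;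 CN$_\Box$: $\varphi\mathrel{\Box\!\!\to}\top$; CM$_\Diamond$: $(\varphi\mathrel{\Diamond\!\!\to}\psi)\vee(\varphi\mathrel{\Diamond\!\!\to}\chi)\to(\varphi\mathrel{\Diamond\!\!\to}\psi\vee\chi)$; CC$_\Diamond$: $(\varphi\mathrel{\Diamond\!\!\to}\psi\vee\chi)\to(\varphi\mathrel{\Diamond\!\!\to}\psi)\vee(\varphi\mathrel{\Diamond\!\!\to}\chi)$; CN$_\Diamond$: $\neg(\varphi\mathrel{\Diamond\!\!\to}\bot)$; CW: $(\varphi\mathrel{\Diamond\!\!\to}\psi)\wedge(\varphi\mathrel{\Box\!\!\to}\chi)\to(\varphi\mathrel{\Diamond\!\!\to}\psi\wedge\chi)$; CFS: $((\varphi\mathrel{\Diamond\!\!\to}\psi)\to(\varphi\mathrel{\Box\!\!\to}\chi))\to(\varphi\mathrel{\Box\!\!\to}(\psi\to\chi))$. Nested sequents: each formula $\varphi$ gets an input polarity $\varphi^\bullet$ or output polarity $\varphi^\circ$. Input sequents $\Lambda ::= \emptyset \mid \Lambda,\varphi^\bullet \mid \Lambda,[\psi:\Lambda]$ and nested sequents $\Gamma ::= \Lambda,\varphi^\circ \mid \Lambda,[\psi:\Gamma]$, where the index $\psi$ of a component $[\psi:\cdot]$ is an unpolarised formula; thus a nested sequent contains exactly one output formula (commas are treated as associative and commutative, as usual). Formula interpretation: $i(\emptyset)=\top$; $i(\Lambda,\varphi^\bullet)=i(\Lambda)\wedge\varphi$; $i(\Lambda,[\psi:\Lambda'])=i(\Lambda)\wedge(\psi\mathrel{\Diamond\!\!\to}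 i(\Lambda'))$; $i(\Lambda,\varphi^\circ)=i(\Lambda)\to\varphi$; $i(\Lambda,[\psi:\Gamma])=i(\Lambda)\to(\psi\mathrel{\Box\!\!\to} i(\Gamma))$. A context $\Gamma\{\ \}$ is a (nested or input) sequent with one hole $\{\ \}$ (possibly inside nested components), to be filled with a sequent; rules are applied only when premisses and conclusion are nested sequents. $\Gamma^{\downarrow}\{\ \}$ denotes $\Gamma\{\ \}$ with its output formula removed. Rules of $\mathsf{N.IntCK}$ (premisses / conclusion): init: $\Gamma\{p^\bullet,p^\circ\}$ (no premiss, $p$ atom); $\bot^\bullet$: $\Gamma\{\bot^\bullet\}$ (no premiss); $\wedge^\bullet$: $\Gamma\{\varphi^\bullet,\psi^\bullet\}$ / $\Gamma\{(\varphi\wedge\psi)^\bullet\}$; $\wedge^\circ$: $\Gamma\{\varphi^\circ\}$, $\Gamma\{\psi^\circ\}$ / $\Gamma\{(\varphi\wedge\psi)^\circ\}$; $\vee^\bullet$: $\Gamma\{\varphi^\bullet\}$, $\Gamma\{\psi^\bullet\}$ / $\Gamma\{(\varphi\vee\psi)^\bullet\}$; $\vee^\circ$: $\Gamma\{\varphi^\circ\}$ / $\Gamma\{(\varphi\vee\psi)^\circ\}$ and $\Gamma\{\psi^\circ\}$ / $\Gamma\{(\varphi\vee\psi)^\circ\}$; $\to^\bullet$: $\Gamma^\downarrow\{(\varphi\to\psi)^\bullet,\varphi^\circ\}$, $\Gamma\{\psi^\bullet\}$ / $\Gamma\{(\varphi\to\psi)^\bullet\}$; $\to^\circ$: $\Gamma\{\varphi^\bullet,\psi^\circ\}$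 / $\Gamma\{(\varphi\to\psi)^\circ\}$; $\Box^\bullet$: $\varphi^\bullet,\eta^\circ$ and $\eta^\bullet,\varphi^\circ$ and $\Gamma\{(\varphi\mathrel{\Box\!\!\to}\psi)^\bullet,[\eta:\psi^\bullet,\Delta]\}$ / $\Gamma\{(\varphi\mathrel{\Box\!\!\to}\psi)^\bullet,[\eta:\Delta]\}$; $\Box^\circ$: $\Gamma\{[\varphi:\psi^\circ]\}$ / $\Gamma\{(\varphi\mathrel{\Box\!\!\to}\psi)^\circ\}$; $\Diamond^\bullet$: $\Gamma\{[\varphi:\psi^\bullet]\}$ / $\Gamma\{(\varphi\mathrel{\Diamond\!\!\to}\psi)^\bullet\}$; $\Diamond^\circ$: $\varphi^\bullet,\eta^\circ$ and $\eta^\bullet,\varphi^\circ$ and $\Gamma\{[\eta:\psi^\circ,\Delta]\}$ / $\Gamma\{(\varphi\mathrel{\Diamond\!\!\to}\psi)^\circ,[\eta:\Delta]\}$. A derivation is a finite tree of rule instances whose leaves are instances of init or $\bot^\bullet$. *)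

From Stdlib Require Import List.
Import ListNotations.

Inductive form : Type :=
| Var : nat -> form
| Bot : form
| And : form -> form -> form
| Or  : form -> form -> form
| Imp : form -> form -> form
| Box : form -> form -> form   (* phi []-> psi *)
| Dia : form -> form -> form.  (* phi <>-> psi *)

Definition Neg (a : form) : form := Imp a Bot.
Definition Top : form := Neg Bot.
Definition Iff (a b : form) : form := And (Imp a b) (Imp b a).

Inductive prf : form -> Prop :=
| ax1 a b : prf (Imp a (Imp b a))
| ax2 a b c : prf (Imp (Imp a (Imp b c)) (Imp (Imp a b) (Imp a c)))
| ax3 a b : prf (Imp (And a b) a)
| ax4 a b : prf (Imp (And a b) b)
| ax5 a b : prf (Imp a (Imp b (And a b)))
| ax6 a b : prf (Imp a (Or a b))
| ax7 a b : prf (Imp b (Or a b))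
| ax8 a b c : prf (Imp (Imp a c) (Imp (Imp b c) (Imp (Or a b) c)))
| ax9 a : prf (Imp Bot a)
| mp a b : prf (Imp a b) -> prf a -> prf b
| RA_box a r b : prf (Iff a r) -> prf (Iff (Box a b) (Box r b))
| RC_box a b c : prf (Iff b c) -> prf (Iff (Box a b) (Box a c))
| RA_dia a r b : prf (Iff a r) -> prf (Iff (Dia a b) (Dia r b))
| RC_dia a b c : prf (Iff b c) -> prf (Iff (Dia a b) (Dia a c))
| CM_box a b c : prf (Imp (Box a (And b c)) (And (Box a b) (Box a c)))
| CC_box a b c : prf (Imp (And (Box a b) (Box a c)) (Box a (And b c)))
| CN_box a : prf (Box a Top)
| CM_dia a b c : prf (Imp (Or (Dia a b) (Dia a c)) (Dia a (Or b c)))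
| CC_dia a b c : prf (Imp (Dia a (Or b c)) (Or (Dia a b) (Dia a c)))
| CN_dia a : prf (Neg (Dia a Bot))
| CW a b c : prf (Imp (And (Dia a b) (Box a c)) (Dia a (And b c)))
| CFS a b c : prf (Imp (Imp (Dia a b) (Box a c)) (Box a (Imp b c))).

(** * Nested sequents
    A sequent is a list of items; commas are associative and commutative,
    which is handled by closing derivability under (deep) permutation. *)
Inductive item : Type :=
| IIn  : form -> item
| IOut : form -> item
| IComp : form -> list item -> item.

Definition seq := list item.

Fixpoint input_item (x : item) : Prop :=
  match x with
  | IIn _ => True
  | IOut _ => False
  | IComp _ u =>
      (fix go (l : list item) : Prop :=
         match l with [] => True | y :: t => input_item y /\ go t end) u
  end.
Definition input_seq (s : seq) : Prop := Forall input_item s.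

Fixpoint nested_item (x : item) : Prop :=
  match x with
  | IIn _ => False
  | IOut _ => True
  | IComp _ u =>
      (fix go (l : list item) : Prop :=
         match l with
         | [] => False
         | y :: t => (nested_item y /\ input_seq t) \/ (input_item y /\ go t)
         end) u
  end.
Fixpoint nested_seq (s : seq) : Prop :=
  match s with
  | [] => False
  | y :: t => (nested_item y /\ input_seq t) \/ (input_item y /\ nested_seq t)
  end.

Fixpoint has_out_item (x : item) : bool :=
  match x with
  | IIn _ => false
  | IOut _ => true
  | IComp _ u => existsb has_out_item u
  end.
Definition has_out (s : seq) : bool := existsb has_out_item s.

(** Input part: i(empty) = Top, i(L,phi^bullet) = i(L) /\ phi,
    i(L,[psi:L']) = i(L) /\ (psi <>-> i(L')).  [iin_item x] is the conjunct
    contributed by an input item. *)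
Fixpoint iin_item (x : item) : form :=
  match x with
  | IIn a => a
  | IOut _ => Top (* not an input item; never used *)
  | IComp b u =>
      Dia b ((fix go (acc : form) (l : list item) : form :=
                match l with
                | [] => acc
                | y :: t => if has_out_item y then go acc t
                            else go (And acc (iin_item y)) t
                end) Top u)
  end.
Fixpoint iin (acc : form) (s : seq) : form :=
  match s with
  | [] => acc
  | y :: t => if has_out_item y then iin acc t else iin (And acc (iin_item y)) t
  end.

(** Output part: phi for phi°, psi []-> i(Gamma) for [psi:Gamma]. *)
Fixpoint iout_item (x : item) : form :=
  match x with
  | IIn _ => Bot (* junk *)
  | IOut a => a
  | IComp b u =>
      Box b (Imp (iin Top u)
                 ((fix go (l : list item) : form :=
                     match l with
                     | [] => Bot (* junk *)
                     | y :: t => if has_out_item y then iout_item y else go t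
                     end) u))
  end.
Fixpoint iout (s : seq) : form :=
  match s with
  | [] => Bot (* junk: never used on nested sequents *)
  | y :: t => if has_out_item y then iout_item y else iout t
  end.

Definition interp (s : seq) : form := Imp (iin Top s) (iout s).

Inductive iequiv : item -> item -> Prop :=
| ie_in a : iequiv (IIn a) (IIn a)
| ie_out a : iequiv (IOut a) (IOut a)
| ie_comp b s t : sequiv s t -> iequiv (IComp b s) (IComp b t)
with sequiv : seq -> seq -> Prop :=
| se_nil : sequiv [] []
| se_cons x y s t : iequiv x y -> sequiv s t -> sequiv (x :: s) (y :: t)
| se_swap x y s : sequiv (x :: y :: s) (y :: x :: s)
| se_trans s t u : sequiv s t -> sequiv t u -> sequiv s u.

Inductive ctx : Type :=
| CHole : seq -> ctx
| CDown : seq -> form -> ctx -> ctx.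

Fixpoint fill (c : ctx) (d : seq) : seq :=
  match c with
  | CHole l => l ++ d
  | CDown l b c' => l ++ [IComp b (fill c' d)]
  end.

Fixpoint rm_out_item (x : item) : list item :=
  match x with
  | IOut _ => []
  | IIn a => [IIn a]
  | IComp b u =>
      [IComp b ((fix go (l : list item) : list item :=
                   match l with [] => [] | y :: t => rm_out_item y ++ go t end) u)]
  end.
Definition rm_out (s : seq) : seq := flat_map rm_out_item s.

Fixpoint cdown (c : ctx) : ctx :=
  match c with
  | CHole l => CHole (rm_out l)
  | CDown l b c' => CDown (rm_out l) b (cdown c')
  end.

(** Derivability in N.IntCK; every rule instance has nested sequents as
    premisses and conclusion. *)
Inductive deriv : seq -> Prop :=
| d_init c p :
    nested_seq (fill c [IIn (Var p); IOut (Var p)]) ->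
    deriv (fill c [IIn (Var p); IOut (Var p)])
| d_botL c :
    nested_seq (fill c [IIn Bot]) -> deriv (fill c [IIn Bot])
| d_andL c a b :
    nested_seq (fill c [IIn (And a b)]) -> nested_seq (fill c [IIn a; IIn b]) ->
    deriv (fill c [IIn a; IIn b]) -> deriv (fill c [IIn (And a b)])
| d_andR c a b :
    nested_seq (fill c [IOut (And a b)]) ->
    nested_seq (fill c [IOut a]) -> nested_seq (fill c [IOut b]) ->
    deriv (fill c [IOut a]) -> deriv (fill c [IOut b]) ->
    deriv (fill c [IOut (And a b)])
| d_orL c a b :
    nested_seq (fill c [IIn (Or a b)]) ->
    nested_seq (fill c [IIn a]) -> nested_seq (fill c [IIn b]) ->
    deriv (fill c [IIn a]) -> deriv (fill c [IIn b]) ->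
    deriv (fill c [IIn (Or a b)])
| d_orR1 c a b :
    nested_seq (fill c [IOut (Or a b)]) -> nested_seq (fill c [IOut a]) ->
    deriv (fill c [IOut a]) -> deriv (fill c [IOut (Or a b)])
| d_orR2 c a b :
    nested_seq (fill c [IOut (Or a b)]) -> nested_seq (fill c [IOut b]) ->
    deriv (fill c [IOut b]) -> deriv (fill c [IOut (Or a b)])
| d_impL c a b :
    nested_seq (fill c [IIn (Imp a b)]) ->
    nested_seq (fill (cdown c) [IIn (Imp a b); IOut a]) ->
    nested_seq (fill c [IIn b]) ->
    deriv (fill (cdown c) [IIn (Imp a b); IOut a]) ->
    deriv (fill c [IIn b]) ->
    deriv (fill c [IIn (Imp a b)])
| d_impR c a b :
    nested_seq (fill c [IOut (Imp a b)]) -> nested_seq (fill c [IIn a; IOut b]) ->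
    deriv (fill c [IIn a; IOut b]) -> deriv (fill c [IOut (Imp a b)])
| d_boxL c a b e d :
    nested_seq (fill c [IIn (Box a b); IComp e d]) ->
    nested_seq (fill c [IIn (Box a b); IComp e (IIn b :: d)]) ->
    deriv [IIn a; IOut e] -> deriv [IIn e; IOut a] ->
    deriv (fill c [IIn (Box a b); IComp e (IIn b :: d)]) ->
    deriv (fill c [IIn (Box a b); IComp e d])
| d_boxR c a b :
    nested_seq (fill c [IOut (Box a b)]) -> nested_seq (fill c [IComp a [IOut b]]) ->
    deriv (fill c [IComp a [IOut b]]) -> deriv (fill c [IOut (Box a b)])
| d_diaL c a b :
    nested_seq (fill c [IIn (Dia a b)]) -> nested_seq (fill c [IComp a [IIn b]]) ->
    deriv (fill c [IComp a [IIn b]]) -> deriv (fill c [IIn (Dia a b)])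
| d_diaR c a b e d :
    nested_seq (fill c [IOut (Dia a b); IComp e d]) ->
    nested_seq (fill c [IComp e (IOut b :: d)]) ->
    deriv [IIn a; IOut e] -> deriv [IIn e; IOut a] ->
    deriv (fill c [IComp e (IOut b :: d)]) ->
    deriv (fill c [IOut (Dia a b); IComp e d])
| d_exch s t : deriv s -> sequiv s t -> deriv t.

From Stdlib Require Import List Arith Lia.
Import ListNotations.

(** Each rule of N.IntCK is shown to preserve provability of the formula interpretation.
    A rule acts inside a context, so its local soundness has to be propagated outwards.
    On the path to the output formula the interpretation is monotone in the hole
    (CM/CC for boxes and necessitation). Inside a component without the output the
    interpretation is a diamond over a conjunction, and a rule is sound in the dual sense
    that the conclusion's antecedent implies a premiss's antecedent (CM/CC for diamonds);
    where a box formula meets such a component, CW carries it inside. The left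
    implication rule, whose first premiss loses its output formula, is justified by CFS:
    the output of a sequent may additionally assume the antecedent of the sequent with
    its output removed. Exchange preserves the interpretation up to provable equivalence. *)

Definition entails (C A : form) : Prop := prf (Imp C A).

Lemma entails_of_prf C A : prf A -> entails C A.
Proof. exact (mp _ _ (ax1 A C)). Qed.

Lemma entails_mp C A B : entails C (Imp A B) -> entails C A -> entails C B.
Proof. intros HAB HA. exact (mp _ _ (mp _ _ (ax2 C A B) HAB) HA). Qed.

Lemma prf_imp_trans A B D : prf (Imp A B) -> prf (Imp B D) -> prf (Imp A D).
Proof. intros HAB HBD. exact (entails_mp _ _ _ (entails_of_prf _ _ HBD) HAB). Qed.

Lemma entails_app C A B : prf (Imp A B) -> entails C A -> entails C B.
Proof. intros HAB. apply entails_mp, entails_of_prf, HAB. Qed.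

Lemma entails_app2 C A B D :
  prf (Imp A (Imp B D)) -> entails C A -> entails C B -> entails C D.
Proof. intros H HA. apply entails_mp, (entails_app _ _ _ H HA). Qed.

Lemma entails_top C : entails C Top.
Proof. apply entails_of_prf, ax9. Qed.

Lemma prf_of_entails A : entails Top A -> prf A.
Proof. intros H. exact (mp _ _ H (ax9 Bot)). Qed.

Lemma entails_last C A : entails (And C A) A.
Proof. apply ax4. Qed.

Lemma entails_weaken C A B : entails C B -> entails (And C A) B.
Proof. exact (prf_imp_trans _ _ _ (ax3 C A)). Qed.

Lemma entails_intro C A B : entails (And C A) B -> entails C (Imp A B).
Proof.
  intros H. apply (prf_imp_trans _ _ _ (ax5 C A)).
  exact (mp _ _ (ax2 A (And C A) B) (entails_of_prf _ _ H)).
Qed.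

Lemma entails_and C A B : entails C A -> entails C B -> entails C (And A B).
Proof. apply entails_app2, ax5. Qed.

Lemma entails_and_l C A B : entails C (And A B) -> entails C A.
Proof. apply entails_app, ax3. Qed.

Lemma entails_and_r C A B : entails C (And A B) -> entails C B.
Proof. apply entails_app, ax4. Qed.

Lemma entails_or_l C A B : entails C A -> entails C (Or A B).
Proof. apply entails_app, ax6. Qed.

Lemma entails_or_r C A B : entails C B -> entails C (Or A B).
Proof. apply entails_app, ax7. Qed.

Lemma entails_or_elim C A B D :
  entails C (Or A B) -> entails (And C A) D -> entails (And C B) D -> entails C D.
Proof.
  intros H HA HB.
  exact (entails_mp _ _ _ (entails_app2 _ _ _ _ (ax8 A B D)
           (entails_intro _ _ _ HA) (entails_intro _ _ _ HB)) H).
Qed.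

Lemma entails_bot C A : entails C Bot -> entails C A.
Proof. apply entails_app, ax9. Qed.

Lemma entails_cut C A B : entails C A -> entails (And C A) B -> entails C B.
Proof. intros HA HB. exact (entails_mp _ _ _ (entails_intro _ _ _ HB) HA). Qed.

Lemma entails_have C A B D :
  prf (Imp A B) -> entails C A -> entails (And C B) D -> entails C D.
Proof. intros HAB HA. apply entails_cut, (entails_app _ _ _ HAB HA). Qed.

Lemma entails_and_hyp_l C A B D : entails (And C A) D -> entails (And C (And A B)) D.
Proof.
  apply prf_imp_trans, entails_and; [apply ax3 | eapply entails_and_l, entails_last].
Qed.

Lemma entails_and_hyp_r C A B D : entails (And C B) D -> entails (And C (And A B)) D.
Proof.
  apply prf_imp_trans, entails_and; [apply ax3 | eapply entails_and_r, entails_last].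
Qed.

(** [hyp] closes [entails C A] when [A] is one of the conjuncts that make up [C]. *)
Ltac hyp :=
  lazymatch goal with
  | |- entails (And ?C ?H) ?A =>
      first [ exact (entails_last C A)
            | lazymatch H with
              | And _ _ => first [ apply entails_and_hyp_l; hyp | apply entails_and_hyp_r; hyp ]
              end
            | apply entails_weaken; hyp ]
  end.

Ltac ent_intros :=
  repeat first
    [ solve [hyp | apply entails_top]
    | lazymatch goal with
      | |- entails _ (Imp _ _) => apply entails_intro
      | |- entails _ (And _ _) => apply entails_and
      | |- entails _ (Iff _ _) => apply entails_and
      end ].

Ltac prf_intros := apply prf_of_entails; ent_intros.

Ltac forward H := eapply (entails_have _ _ _ _ H); [hyp |].

Ltac hyp_mp A := apply (entails_mp _ A); [hyp |].

Lemma prf_iff_intro A B : prf (Imp A B) -> prf (Imp B A) -> prf (Iff A B).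
Proof.
  intros HAB HBA. prf_intros; [apply (entails_app _ _ _ HAB) | apply (entails_app _ _ _ HBA)]; hyp.
Qed.

Lemma prf_iff_l A B : prf (Iff A B) -> prf (Imp A B).
Proof. apply mp, ax3. Qed.

Lemma prf_iff_r A B : prf (Iff A B) -> prf (Imp B A).
Proof. apply mp, ax4. Qed.

Lemma prf_iff_refl A : prf (Iff A A).
Proof. prf_intros. Qed.

Lemma prf_iff_sym A B : prf (Iff A B) -> prf (Iff B A).
Proof. intros H. apply prf_iff_intro; [apply prf_iff_r | apply prf_iff_l]; exact H. Qed.

Lemma prf_iff_trans A B D : prf (Iff A B) -> prf (Iff B D) -> prf (Iff A D).
Proof.
  intros HAB HBD. apply prf_iff_intro; eapply prf_imp_trans;
    eauto using prf_iff_l, prf_iff_r.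
Qed.

Lemma prf_iff_and A A' B B' :
  prf (Iff A A') -> prf (Iff B B') -> prf (Iff (And A B) (And A' B')).
Proof.
  intros HA HB. apply prf_iff_intro; prf_intros.
  - apply (entails_app _ _ _ (prf_iff_l _ _ HA)); hyp.
  - apply (entails_app _ _ _ (prf_iff_l _ _ HB)); hyp.
  - apply (entails_app _ _ _ (prf_iff_r _ _ HA)); hyp.
  - apply (entails_app _ _ _ (prf_iff_r _ _ HB)); hyp.
Qed.

Lemma prf_iff_imp A A' B B' :
  prf (Iff A A') -> prf (Iff B B') -> prf (Iff (Imp A B) (Imp A' B')).
Proof.
  intros HA HB. apply prf_iff_intro; prf_intros.
  - apply (entails_app _ _ _ (prf_iff_l _ _ HB)), (entails_mp _ A); [hyp |].
    apply (entails_app _ _ _ (prf_iff_r _ _ HA)); hyp.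
  - apply (entails_app _ _ _ (prf_iff_r _ _ HB)), (entails_mp _ A'); [hyp |].
    apply (entails_app _ _ _ (prf_iff_l _ _ HA)); hyp.
Qed.

Lemma box_mono f A B : prf (Imp A B) -> prf (Imp (Box f A) (Box f B)).
Proof.
  intros HAB.
  assert (HA : prf (Iff A (And A B))).
  { apply prf_iff_intro; prf_intros. apply (entails_app _ _ _ HAB); hyp. }
  apply (prf_imp_trans _ _ _ (prf_iff_l _ _ (RC_box f _ _ HA))).
  prf_intros. apply (entails_and_r _ (Box f A)), (entails_app _ _ _ (CM_box _ _ _)); hyp.
Qed.

Lemma dia_mono f A B : prf (Imp A B) -> prf (Imp (Dia f A) (Dia f B)).
Proof.
  intros HAB.
  assert (HB : prf (Iff (Or A B) B)).
  { apply prf_iff_intro; prf_intros.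
    - apply (entails_or_elim _ A B); [hyp | apply (entails_app _ _ _ HAB) |]; hyp.
    - apply entails_or_r; hyp. }
  refine (prf_imp_trans _ _ _ _ (prf_iff_l _ _ (RC_dia f _ _ HB))).
  prf_intros. apply (entails_app _ _ _ (CM_dia _ _ _)), entails_or_l; hyp.
Qed.

Lemma box_nec f A : prf A -> prf (Box f A).
Proof.
  intros HA. assert (H : prf (Iff Top A)) by (prf_intros; apply entails_of_prf, HA).
  exact (mp _ _ (prf_iff_l _ _ (RC_box f _ _ H)) (CN_box f)).
Qed.

Lemma box_mono2 f A B D :
  prf (Imp A (Imp B D)) -> prf (Imp (Box f A) (Imp (Box f B) (Box f D))).
Proof.
  intros H. prf_intros. apply (entails_app _ (Box f (And A B))).
  - apply box_mono. prf_intros. apply (entails_app2 _ _ _ _ H); hyp.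
  - apply (entails_app _ _ _ (CC_box _ _ _)). ent_intros.
Qed.

Lemma dia_refute f A : prf (Imp A Bot) -> prf (Imp (Dia f A) Bot).
Proof. intros H. exact (prf_imp_trans _ _ _ (dia_mono _ _ _ H) (CN_dia f)). Qed.

Lemma box_antecedent_equiv a e b :
  prf (Imp a e) -> prf (Imp e a) -> prf (Imp (Box a b) (Box e b)).
Proof. intros Hae Hea. apply prf_iff_l, RA_box, prf_iff_intro; assumption. Qed.

Lemma dia_antecedent_equiv a e b :
  prf (Imp a e) -> prf (Imp e a) -> prf (Imp (Dia a b) (Dia e b)).
Proof. intros Hae Hea. apply prf_iff_l, RA_dia, prf_iff_intro; assumption. Qed.

Fixpoint item_nested_ind (P : item -> Prop)
  (HIn : forall a, P (IIn a)) (HOut : forall a, P (IOut a))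
  (HComp : forall b u, Forall P u -> P (IComp b u)) (x : item) {struct x} : P x :=
  match x with
  | IIn a => HIn a
  | IOut a => HOut a
  | IComp b u => HComp b u
      ((fix go (l : list item) : Forall P l :=
          match l with
          | [] => Forall_nil _
          | y :: t => Forall_cons y (item_nested_ind P HIn HOut HComp y) (go t)
          end) u)
  end.

Fixpoint nout_item (x : item) : nat :=
  match x with
  | IIn _ => 0
  | IOut _ => 1
  | IComp _ u => list_sum (map nout_item u)
  end.

Definition nout (s : seq) : nat := list_sum (map nout_item s).

Fixpoint nout_ctx (c : ctx) : nat :=
  match c with
  | CHole l => nout l
  | CDown l _ c' => nout l + nout_ctx c'
  end.

Lemma nout_cons x s : nout (x :: s) = nout_item x + nout s.
Proof. reflexivity. Qed.

Lemma nout_single x : nout [x] = nout_item x.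
Proof. apply Nat.add_0_r. Qed.

Lemma nout_item_comp b u : nout_item (IComp b u) = nout u.
Proof. reflexivity. Qed.

Lemma nout_app l d : nout (l ++ d) = nout l + nout d.
Proof. unfold nout. rewrite map_app. apply list_sum_app. Qed.

Lemma nout_fill c d : nout (fill c d) = nout_ctx c + nout d.
Proof.
  induction c as [l | l b c IH]; cbn [fill nout_ctx]; rewrite nout_app; [reflexivity |].
  rewrite nout_single, nout_item_comp, IH. lia.
Qed.

Lemma has_out_item_nout x : has_out_item x = negb (nout_item x =? 0).
Proof.
  induction x as [a | a | b u IHu] using item_nested_ind; [reflexivity | reflexivity |].
  rewrite nout_item_comp. induction IHu as [| y t Hy _ IH]; [reflexivity |].
  cbn [has_out_item existsb]. rewrite nout_cons, Hy.
  change (existsb has_out_item t) with (has_out_item (IComp b t)). rewrite IH.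
  destruct (nout_item y), (nout t); reflexivity.
Qed.

Lemma has_out_nout s : has_out s = negb (nout s =? 0).
Proof.
  induction s as [| x t IH]; [reflexivity |].
  unfold has_out in *. cbn [existsb]. rewrite nout_cons, has_out_item_nout, IH.
  destruct (nout_item x), (nout t); reflexivity.
Qed.

Lemma has_out_pos s : nout s <> 0 -> has_out s = true.
Proof. rewrite has_out_nout. destruct (Nat.eqb_spec (nout s) 0); auto; lia. Qed.

Lemma has_out_zero s : nout s = 0 -> has_out s = false.
Proof. rewrite has_out_nout. intros ->. reflexivity. Qed.

Lemma has_out_item_pos x : nout_item x <> 0 -> has_out_item x = true.
Proof. rewrite has_out_item_nout. destruct (Nat.eqb_spec (nout_item x) 0); auto; lia. Qed.

Lemma rm_out_cons x s : rm_out (x :: s) = rm_out_item x ++ rm_out s.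
Proof. reflexivity. Qed.

Lemma rm_out_item_comp b u : rm_out_item (IComp b u) = [IComp b (rm_out u)].
Proof. reflexivity. Qed.

Lemma rm_out_app l d : rm_out (l ++ d) = rm_out l ++ rm_out d.
Proof. apply flat_map_app. Qed.

Lemma rm_out_item_id x : nout_item x = 0 -> rm_out_item x = [x].
Proof.
  induction x as [a | a | b u IHu] using item_nested_ind; [reflexivity | discriminate |].
  rewrite rm_out_item_comp, nout_item_comp. intros Hu. do 2 f_equal.
  induction IHu as [| y t Hy _ IH]; [reflexivity |].
  rewrite nout_cons in Hu. rewrite rm_out_cons, Hy, IH by lia. reflexivity.
Qed.

Lemma rm_out_id s : nout s = 0 -> rm_out s = s.
Proof.
  induction s as [| x t IH]; [reflexivity |].
  rewrite nout_cons, rm_out_cons. intros Hs. rewrite rm_out_item_id, IH by lia. reflexivity.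
Qed.

Lemma nout_rm_out_item x : nout (rm_out_item x) = 0.
Proof.
  induction x as [a | a | b u IHu] using item_nested_ind; [reflexivity | reflexivity |].
  rewrite rm_out_item_comp, nout_single, nout_item_comp.
  induction IHu as [| y t Hy _ IH]; [reflexivity |].
  rewrite rm_out_cons, nout_app, Hy, IH. reflexivity.
Qed.

Lemma nout_rm_out s : nout (rm_out s) = 0.
Proof.
  induction s as [| x t IH]; [reflexivity |].
  rewrite rm_out_cons, nout_app, nout_rm_out_item, IH. reflexivity.
Qed.

Lemma nout_ctx_cdown c : nout_ctx (cdown c) = 0.
Proof. induction c; cbn [cdown nout_ctx]; rewrite nout_rm_out; lia. Qed.

Lemma fill_cdown c d : nout_ctx c = 0 -> fill (cdown c) d = fill c d.
Proof.
  induction c as [l | l b c IH]; cbn [cdown nout_ctx fill]; intros Hc;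
    rewrite rm_out_id by lia; [| rewrite IH by lia]; reflexivity.
Qed.

Lemma nout_input_item x : input_item x -> nout_item x = 0.
Proof.
  induction x as [a | a | b u IHu] using item_nested_ind; [reflexivity | contradiction |].
  rewrite nout_item_comp. induction IHu as [| y t Hy _ IH]; [reflexivity |].
  cbn [input_item]. intros [H1 H2]. rewrite nout_cons, (Hy H1). exact (IH H2).
Qed.

Lemma nout_input_seq s : input_seq s -> nout s = 0.
Proof. induction 1; [reflexivity |]. rewrite nout_cons, nout_input_item; assumption. Qed.

Lemma nout_nested_item x : nested_item x -> nout_item x = 1.
Proof.
  induction x as [a | a | b u IHu] using item_nested_ind; [contradiction | reflexivity |].
  rewrite nout_item_comp. induction IHu as [| y t Hy _ IH]; [contradiction |].
  cbn [nested_item]. rewrite nout_cons.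
  intros [[H1 H2] | [H1 H2]]; [rewrite (Hy H1), nout_input_seq | rewrite nout_input_item, IH]; auto.
Qed.

Lemma nout_nested_seq s : nested_seq s -> nout s = 1.
Proof.
  induction s as [| x t IH]; [contradiction |]. rewrite nout_cons.
  intros [[H1 H2] | [H1 H2]];
    [rewrite nout_nested_item, nout_input_seq | rewrite nout_input_item, IH]; auto.
Qed.

Definition ante (s : seq) : form := iin Top s.

Lemma iin_app l d acc : iin acc (l ++ d) = iin (iin acc l) d.
Proof.
  revert acc. induction l as [| x t IH]; intros acc; [reflexivity |].
  cbn. destruct (has_out_item x); apply IH.
Qed.

Lemma iout_app l d : iout (l ++ d) = if has_out l then iout l else iout d.
Proof.
  induction l as [| x t IH]; [reflexivity |].
  unfold has_out. cbn. destruct (has_out_item x); [reflexivity | exact IH].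
Qed.

Lemma iin_acc_iff s acc : prf (Iff (iin acc s) (And acc (ante s))).
Proof.
  revert acc. induction s as [| x t IH]; intros acc; [prf_intros |].
  unfold ante. cbn [iin]. destruct (has_out_item x); [apply IH |].
  pose proof (IH (And acc (iin_item x))) as Hacc.
  pose proof (IH (And Top (iin_item x))) as Htop.
  apply prf_iff_intro; prf_intros.
  - forward (prf_iff_l _ _ Hacc). ent_intros.
  - forward (prf_iff_l _ _ Hacc). apply (entails_app _ _ _ (prf_iff_r _ _ Htop)). ent_intros.
  - forward (prf_iff_l _ _ Htop). apply (entails_app _ _ _ (prf_iff_r _ _ Hacc)). ent_intros.
Qed.

Lemma ante_app_iff l d : prf (Iff (ante (l ++ d)) (And (ante l) (ante d))).
Proof. unfold ante at 1. rewrite iin_app. apply iin_acc_iff. Qed.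

Lemma entails_ante_app C l d :
  entails C (ante l) -> entails C (ante d) -> entails C (ante (l ++ d)).
Proof.
  intros Hl Hd.
  apply (entails_app _ _ _ (prf_iff_r _ _ (ante_app_iff l d))), entails_and; assumption.
Qed.

Lemma entails_split_ante_app C l d D :
  entails (And (And C (ante l)) (ante d)) D -> entails (And C (ante (l ++ d))) D.
Proof.
  apply prf_imp_trans. prf_intros; forward (prf_iff_l _ _ (ante_app_iff l d)); hyp.
Qed.

Lemma iin_item_comp b u : iin_item (IComp b u) = Dia b (ante u).
Proof. reflexivity. Qed.

Lemma iout_item_comp b u : iout_item (IComp b u) = Box b (interp u).
Proof. reflexivity. Qed.

Lemma ante_single_in x : has_out_item x = false -> ante [x] = And Top (iin_item x).
Proof. intros Hx. unfold ante. cbn [iin]. rewrite Hx. reflexivity. Qed.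

Lemma ante_single_out x : has_out_item x = true -> ante [x] = Top.
Proof. intros Hx. unfold ante. cbn [iin]. rewrite Hx. reflexivity. Qed.

Lemma iout_single x : has_out_item x = true -> iout [x] = iout_item x.
Proof. intros Hx. cbn [iout]. rewrite Hx. reflexivity. Qed.

Lemma ante_comp_in b u : nout u = 0 -> ante [IComp b u] = And Top (Dia b (ante u)).
Proof. intros Hu. apply ante_single_in, (has_out_zero u Hu). Qed.

Lemma ante_comp_out b u : nout u <> 0 -> ante [IComp b u] = Top.
Proof. intros Hu. apply ante_single_out, (has_out_pos u Hu). Qed.

Lemma iout_comp_out b u : nout u <> 0 -> iout [IComp b u] = Box b (interp u).
Proof. intros Hu. apply iout_single, (has_out_pos u Hu). Qed.

Lemma interp_app_in l d : nout l = 0 -> interp (l ++ d) = Imp (ante (l ++ d)) (iout d).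
Proof. intros Hl. unfold interp. rewrite iout_app, has_out_zero by exact Hl. reflexivity. Qed.

Lemma interp_app_out l d : nout l <> 0 -> interp (l ++ d) = Imp (ante (l ++ d)) (iout l).
Proof. intros Hl. unfold interp. rewrite iout_app, has_out_pos by exact Hl. reflexivity. Qed.

(** * Propagating soundness through contexts *)

(** A sequent without output formula, such as the content of a component not containing the
    output, is read dually: through the refutability of its antecedent, and a rule acting
    there is sound when the antecedent of its conclusion implies that of a premiss. *)
Definition valid (d : seq) : Prop :=
  if has_out d then prf (interp d) else prf (Imp (ante d) Bot).

Lemma valid_app l d : nout l + nout d <= 1 -> valid d -> valid (l ++ d).
Proof.
  unfold valid, interp. rewrite iout_app, !has_out_nout, nout_app. intros Hc Hd.
  destruct (nout l), (nout d); cbn in *; try lia; prf_intros; apply entails_split_ante_app;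
    [| | apply entails_bot]; apply (entails_app _ _ _ Hd); hyp.
Qed.

Lemma valid_comp b u : valid u -> valid [IComp b u].
Proof.
  unfold valid. rewrite !has_out_nout, nout_single, nout_item_comp.
  destruct (Nat.eqb_spec (nout u) 0) as [Hu | Hu]; cbn [negb]; intros H.
  - rewrite ante_comp_in by exact Hu. prf_intros. apply (entails_app _ _ _ (dia_refute b _ H)); hyp.
  - unfold interp. rewrite ante_comp_out, iout_comp_out by exact Hu.
    apply entails_of_prf, box_nec, H.
Qed.

Lemma valid_fill c d : nout_ctx c + nout d <= 1 -> valid d -> valid (fill c d).
Proof.
  induction c as [l | l b c IH]; cbn [fill nout_ctx]; intros Hc Hd.
  - apply valid_app; assumption.
  - apply valid_app; [rewrite nout_single, nout_item_comp, nout_fill; lia |].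
    apply valid_comp, IH; [lia | exact Hd].
Qed.

Definition rule_sound (d1 d1' d2 : seq) : Prop :=
  if has_out d2 then prf (Imp (interp d1) (Imp (interp d1') (interp d2)))
  else prf (Imp (ante d2) (Or (ante d1) (ante d1'))).

Lemma rule_sound_app l d1 d1' d2 :
  nout l + nout d2 <= 1 -> rule_sound d1 d1' d2 -> rule_sound (l ++ d1) (l ++ d1') (l ++ d2).
Proof.
  unfold rule_sound, interp. rewrite !iout_app, !has_out_nout, !nout_app. intros Hc HS.
  destruct (nout l), (nout d2); cbn [negb Nat.add Nat.eqb] in *; try lia;
    prf_intros; apply entails_split_ante_app.
  - forward HS. apply (entails_or_elim _ (ante d1) (ante d1'));
      [hyp | apply entails_or_l | apply entails_or_r]; apply entails_ante_app; hyp.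
  - apply (entails_mp _ (ante d2)); [apply (entails_app2 _ _ _ _ HS) | hyp]; ent_intros.
    + hyp_mp (ante (l ++ d1)). apply entails_ante_app; hyp.
    + hyp_mp (ante (l ++ d1')). apply entails_ante_app; hyp.
  - forward HS. apply (entails_or_elim _ (ante d1) (ante d1')); [hyp | ..].
    + hyp_mp (ante (l ++ d1)). apply entails_ante_app; hyp.
    + hyp_mp (ante (l ++ d1')). apply entails_ante_app; hyp.
Qed.

Lemma rule_sound_comp b d1 d1' d2 :
  nout d1 = nout d2 -> nout d1' = nout d2 -> rule_sound d1 d1' d2 ->
  rule_sound [IComp b d1] [IComp b d1'] [IComp b d2].
Proof.
  unfold rule_sound. rewrite !has_out_nout, !nout_single, !nout_item_comp. intros E1 E' HS.
  destruct (Nat.eqb_spec (nout d2) 0) as [H0 | H0]; cbn [negb] in *.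
  - rewrite !ante_comp_in by lia. prf_intros.
    forward (dia_mono b _ _ HS). forward (CC_dia b (ante d1) (ante d1')).
    apply (entails_or_elim _ (Dia b (ante d1)) (Dia b (ante d1')));
      [hyp | apply entails_or_l | apply entails_or_r]; ent_intros.
  - unfold interp at 1 2 3. rewrite !ante_comp_out, !iout_comp_out by lia. prf_intros.
    apply (entails_app2 _ _ _ _ (box_mono2 _ _ _ _ HS)); hyp_mp Top; apply entails_top.
Qed.

Lemma rule_sound_fill c d1 d1' d2 :
  nout d1 = nout d2 -> nout d1' = nout d2 -> nout_ctx c + nout d2 <= 1 ->
  rule_sound d1 d1' d2 -> rule_sound (fill c d1) (fill c d1') (fill c d2).
Proof.
  induction c as [l | l b c IH]; cbn [fill nout_ctx]; intros E1 E' Hc HS.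
  - apply rule_sound_app; assumption.
  - apply rule_sound_app; [rewrite nout_single, nout_item_comp, nout_fill; lia |].
    apply rule_sound_comp; rewrite ?nout_fill; [lia | lia | apply IH; assumption || lia].
Qed.

Lemma prf_interp_of_rule_sound d1 d1' d2 :
  nout d2 <> 0 -> rule_sound d1 d1' d2 -> prf (interp d1) -> prf (interp d1') -> prf (interp d2).
Proof.
  unfold rule_sound. intros Hd2. rewrite (has_out_pos _ Hd2).
  intros HS H1 H1'. exact (mp _ _ (mp _ _ HS H1) H1').
Qed.

Lemma prf_interp_fill_valid c d : nout (fill c d) = 1 -> valid d -> prf (interp (fill c d)).
Proof.
  intros Hc Hd. pose proof (valid_fill c d ltac:(rewrite nout_fill in Hc; lia) Hd) as H.
  unfold valid in H. rewrite has_out_pos in H by lia. exact H.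
Qed.

Lemma prf_interp_fill c d1 d1' d2 :
  nout d1 = nout d2 -> nout d1' = nout d2 -> nout (fill c d2) = 1 -> rule_sound d1 d1' d2 ->
  prf (interp (fill c d1)) -> prf (interp (fill c d1')) -> prf (interp (fill c d2)).
Proof.
  intros E1 E' Hc HS. rewrite nout_fill in Hc.
  apply prf_interp_of_rule_sound; [rewrite nout_fill; lia |].
  apply rule_sound_fill; [assumption | assumption | lia | exact HS].
Qed.

Lemma ante_cons_out x s : has_out_item x = true -> ante (x :: s) = ante s.
Proof. intros Hx. unfold ante. cbn [iin]. rewrite Hx. reflexivity. Qed.

Lemma iout_cons_out x s : has_out_item x = true -> iout (x :: s) = iout_item x.
Proof. intros Hx. cbn [iout]. rewrite Hx. reflexivity. Qed.

Lemma split_output l :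
  nout l = 1 -> exists l1 y l2, l = l1 ++ y :: l2 /\ nout l1 = 0 /\ nout_item y = 1 /\ nout l2 = 0.
Proof.
  induction l as [| x t IH]; [discriminate |]. rewrite nout_cons. intros Hl.
  destruct (nout_item x) eqn:Hx.
  - destruct (IH Hl) as (l1 & y & l2 & -> & H1 & Hy & H2).
    exists (x :: l1), y, l2. rewrite nout_cons. repeat split; auto; lia.
  - exists [], x, t. repeat split; lia.
Qed.

Lemma interp_of_rm_out_items l :
  (forall y, In y l -> nout_item y = 1 ->
     prf (Imp (Imp (ante (rm_out_item y)) (iout_item y)) (iout_item y))) ->
  nout l = 1 -> prf (Imp (Imp (ante (rm_out l)) (interp l)) (interp l)).
Proof.
  intros Hitems Hl. destruct (split_output l Hl) as (l1 & y & l2 & -> & H1 & Hy & H2).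
  assert (Hy_out : has_out_item y = true) by (apply has_out_item_pos; lia).
  pose proof (Hitems y (in_elt y l1 l2) Hy) as Hy_rm.
  rewrite interp_app_in, iout_cons_out by assumption.
  rewrite rm_out_app, rm_out_cons, (rm_out_id l1), (rm_out_id l2) by assumption.
  prf_intros. apply entails_split_ante_app. rewrite ante_cons_out by exact Hy_out.
  apply (entails_app _ _ _ Hy_rm). ent_intros.
  apply (entails_mp _ (ante (l1 ++ y :: l2))).
  - hyp_mp (ante (l1 ++ rm_out_item y ++ l2)). repeat apply entails_ante_app; hyp.
  - apply entails_ante_app; [hyp |]. rewrite ante_cons_out by exact Hy_out. hyp.
Qed.

(** At each component on the path to the output, CFS turns
    [(f <>-> A) -> (f []-> B)] into [f []-> (A -> B)]. *)
Lemma iout_item_of_rm_out y :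
  nout_item y = 1 -> prf (Imp (Imp (ante (rm_out_item y)) (iout_item y)) (iout_item y)).
Proof.
  induction y as [a | a | b u IHu] using item_nested_ind; intros Hy; [discriminate | |].
  - prf_intros. hyp_mp Top. apply entails_top.
  - rewrite nout_item_comp in Hy.
    assert (Hu : prf (Imp (Imp (ante (rm_out u)) (interp u)) (interp u))).
    { apply interp_of_rm_out_items; [| exact Hy].
      intros y Hin. exact (proj1 (Forall_forall _ u) IHu y Hin). }
    rewrite rm_out_item_comp, iout_item_comp, ante_comp_in by apply nout_rm_out.
    prf_intros. apply (entails_app _ _ _ (box_mono _ _ _ Hu)), (entails_app _ _ _ (CFS _ _ _)).
    ent_intros. hyp_mp (And Top (Dia b (ante (rm_out u)))). ent_intros.
Qed.

Lemma interp_of_rm_out l : nout l = 1 -> prf (Imp (Imp (ante (rm_out l)) (interp l)) (interp l)).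
Proof. apply interp_of_rm_out_items. intros y _. apply iout_item_of_rm_out. Qed.

(** * The left implication rule *)

Lemma ante_fill_of_interp c d1 d2 e :
  nout_ctx c = 0 -> nout d1 = 0 -> nout d2 = 0 -> nout e = 1 ->
  prf (Imp (And (ante d1) (interp e)) (ante d2)) ->
  prf (Imp (interp (fill c e)) (Imp (ante (fill c d1)) (ante (fill c d2)))).
Proof.
  intros Hc H1 H2 He H. induction c as [m | m f c IH]; cbn [fill nout_ctx] in *.
  - rewrite interp_app_in by exact Hc. prf_intros. apply entails_split_ante_app.
    apply entails_ante_app; [hyp |]. apply (entails_app _ _ _ H). ent_intros.
    apply entails_intro. hyp_mp (ante (m ++ e)). apply entails_ante_app; hyp.
  - assert (Hd : forall d, nout d = 0 -> nout (fill c d) = 0)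
      by (intros d Hd; rewrite nout_fill; lia).
    specialize (IH ltac:(lia)).
    rewrite interp_app_in, iout_comp_out by (rewrite ?nout_fill; lia).
    prf_intros. apply entails_split_ante_app. rewrite (ante_comp_in _ _ (Hd d1 H1)).
    apply entails_ante_app; [hyp |]. rewrite (ante_comp_in _ _ (Hd d2 H2)). ent_intros.
    apply (entails_app _ (Dia f (And (ante (fill c d1)) (interp (fill c e))))).
    + apply dia_mono. prf_intros. apply (entails_app2 _ _ _ _ IH); hyp.
    + apply (entails_app _ _ _ (CW _ _ _)). ent_intros.
      hyp_mp (ante (m ++ [IComp f (fill c e)])). apply entails_ante_app; [hyp |].
      rewrite ante_comp_out by (rewrite nout_fill; lia). apply entails_top.
Qed.

(** The output lies in [l]; [interp_of_rm_out] supplies the antecedent of [rm_out l] under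
    which the first premiss can be used. *)
Lemma impL_sound_output_prefix l c a b :
  nout l = 1 -> nout_ctx c = 0 ->
  rule_sound (rm_out l ++ fill c [IIn (Imp a b); IOut a]) (l ++ fill c [IIn b])
             (l ++ fill c [IIn (Imp a b)]).
Proof.
  intros Hl Hc. unfold rule_sound. rewrite has_out_pos by (rewrite nout_app; lia).
  set (E := fill c [IIn (Imp a b); IOut a]).
  assert (Hmp : prf (Imp (interp E) (Imp (ante (fill c [IIn (Imp a b)])) (ante (fill c [IIn b]))))).
  { apply ante_fill_of_interp; try reflexivity; [exact Hc |].
    unfold interp, ante. cbn. prf_intros. hyp_mp a. hyp_mp (And Top (Imp a b)). ent_intros. }
  rewrite interp_app_in by apply nout_rm_out. rewrite !interp_app_out by lia.
  prf_intros. apply entails_split_ante_app.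
  apply (entails_mp _ (ante l)); [| hyp].
  apply (entails_app _ _ _ (interp_of_rm_out l Hl)). ent_intros. apply entails_intro.
  hyp_mp (ante (l ++ fill c [IIn b])). apply entails_ante_app; [hyp |].
  apply (entails_app2 _ _ _ _ Hmp); [| hyp]. apply entails_intro.
  hyp_mp (ante (rm_out l ++ E)). apply entails_ante_app; hyp.
Qed.

Lemma impL_sound c a b :
  nout_ctx c = 1 ->
  rule_sound (fill (cdown c) [IIn (Imp a b); IOut a]) (fill c [IIn b]) (fill c [IIn (Imp a b)]).
Proof.
  induction c as [l | l f c IH]; cbn [fill cdown nout_ctx]; intros Hc.
  (* [fill (CHole []) d] and [fill (CDown [] f c) d] reduce to [d] and [[IComp f (fill c d)]]. *)
  - exact (impL_sound_output_prefix l (CHole []) a b Hc eq_refl).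
  - destruct (nout l) eqn:Hl.
    + rewrite rm_out_id by exact Hl.
      apply rule_sound_app; [rewrite nout_single, nout_item_comp, nout_fill; cbn; lia |].
      apply rule_sound_comp; [rewrite !nout_fill, nout_ctx_cdown; cbn; lia | |].
      * rewrite !nout_fill. reflexivity.
      * apply IH. lia.
    + rewrite fill_cdown by lia.
      exact (impL_sound_output_prefix l (CDown [] f c) a b ltac:(lia) ltac:(cbn; lia)).
Qed.

(** * Exchange *)

(** [iout] returns the first output formula it meets, so it is invariant under exchange
    only in sequents with at most one output formula. *)
Definition interp_equiv_item (x y : item) : Prop :=
  nout_item x = nout_item y /\ prf (Iff (iin_item x) (iin_item y)) /\
  (nout_item x <= 1 -> prf (Iff (iout_item x) (iout_item y))).

Definition interp_equiv (s t : seq) : Prop :=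
  nout s = nout t /\ prf (Iff (ante s) (ante t)) /\
  (nout s <= 1 -> prf (Iff (iout s) (iout t))).

Lemma interp_equiv_item_refl x : interp_equiv_item x x.
Proof. repeat split; intros; apply prf_iff_refl. Qed.

Lemma interp_equiv_comp b s t : interp_equiv s t -> interp_equiv_item (IComp b s) (IComp b t).
Proof.
  intros (Hn & Ha & Ho). unfold interp_equiv_item.
  rewrite !nout_item_comp, !iin_item_comp, !iout_item_comp. repeat split.
  - exact Hn.
  - apply RC_dia, Ha.
  - intros Hs. apply RC_box, prf_iff_imp; [exact Ha | exact (Ho Hs)].
Qed.

Lemma ante_cons_iff x s : prf (Iff (ante (x :: s)) (And (ante [x]) (ante s))).
Proof. exact (ante_app_iff [x] s). Qed.

Lemma ante_single_iff x y :
  has_out_item x = has_out_item y -> prf (Iff (iin_item x) (iin_item y)) ->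
  prf (Iff (ante [x]) (ante [y])).
Proof.
  intros Hh Hi. unfold ante. cbn [iin]. rewrite Hh.
  destruct (has_out_item y); [apply prf_iff_refl |].
  apply prf_iff_and; [apply prf_iff_refl | exact Hi].
Qed.

Lemma interp_equiv_cons x y s t :
  interp_equiv_item x y -> interp_equiv s t -> interp_equiv (x :: s) (y :: t).
Proof.
  intros (Hnx & Hix & Hox) (Hns & Has & Hos).
  assert (Hh : has_out_item x = has_out_item y) by (rewrite !has_out_item_nout, Hnx; reflexivity).
  unfold interp_equiv. rewrite !nout_cons. repeat split.
  - lia.
  - eapply prf_iff_trans; [apply ante_cons_iff |].
    eapply prf_iff_trans; [| apply prf_iff_sym, ante_cons_iff].
    apply prf_iff_and; [apply ante_single_iff |]; assumption.
  - intros Hc. cbn [iout]. rewrite <- Hh. destruct (has_out_item x); [apply Hox | apply Hos]; lia.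
Qed.

Lemma interp_equiv_swap x y s : interp_equiv (x :: y :: s) (y :: x :: s).
Proof.
  unfold interp_equiv. rewrite !nout_cons. repeat split.
  - lia.
  - assert (Hswap : forall A B S, prf (Iff (And A (And B S)) (And B (And A S))))
      by (intros; prf_intros).
    eapply prf_iff_trans; [apply ante_cons_iff |].
    eapply prf_iff_trans; [apply prf_iff_and; [apply prf_iff_refl | apply ante_cons_iff] |].
    eapply prf_iff_trans; [apply Hswap |].
    eapply prf_iff_trans;
      [apply prf_iff_and; [apply prf_iff_refl | apply prf_iff_sym, ante_cons_iff] |].
    apply prf_iff_sym, ante_cons_iff.
  - intros Hc. cbn [iout].
    destruct (has_out_item x) eqn:Hx, (has_out_item y) eqn:Hy; try apply prf_iff_refl.
    rewrite has_out_item_nout in Hx, Hy.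
    destruct (Nat.eqb_spec (nout_item x) 0), (Nat.eqb_spec (nout_item y) 0); discriminate || lia.
Qed.

Lemma interp_equiv_trans s t u : interp_equiv s t -> interp_equiv t u -> interp_equiv s u.
Proof.
  intros (Hn1 & Ha1 & Ho1) (Hn2 & Ha2 & Ho2). repeat split.
  - lia.
  - exact (prf_iff_trans _ _ _ Ha1 Ha2).
  - intros Hs. exact (prf_iff_trans _ _ _ (Ho1 Hs) (Ho2 ltac:(lia))).
Qed.

Scheme iequiv_mut_ind := Minimality for iequiv Sort Prop
  with sequiv_mut_ind := Minimality for sequiv Sort Prop.

Lemma interp_equiv_of_sequiv s t : sequiv s t -> interp_equiv s t.
Proof.
  apply (sequiv_mut_ind interp_equiv_item interp_equiv).
  - intros. apply interp_equiv_item_refl.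
  - intros. apply interp_equiv_item_refl.
  - intros b s' t' _. apply interp_equiv_comp.
  - repeat split; intros; apply prf_iff_refl.
  - intros x y s' t' _ Hxy _. apply interp_equiv_cons, Hxy.
  - intros. apply interp_equiv_swap.
  - intros s' t' u _ H1 _. apply interp_equiv_trans, H1.
Qed.

Lemma prf_interp_sequiv s t :
  sequiv s t -> nout s <= 1 -> prf (interp s) -> prf (interp t).
Proof.
  intros Hst Hs. destruct (interp_equiv_of_sequiv s t Hst) as (_ & Ha & Ho).
  apply mp, prf_iff_l, prf_iff_imp; [exact Ha | exact (Ho Hs)].
Qed.

Ltac unfold_rule := unfold rule_sound, interp, ante; cbn.

Lemma rule_sound_andL a b : rule_sound [IIn a; IIn b] [IIn a; IIn b] [IIn (And a b)].
Proof. unfold_rule. prf_intros. apply entails_or_l. ent_intros. Qed.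

Lemma rule_sound_andR a b : rule_sound [IOut a] [IOut b] [IOut (And a b)].
Proof. unfold_rule. prf_intros; hyp_mp Top; apply entails_top. Qed.

Lemma rule_sound_orL a b : rule_sound [IIn a] [IIn b] [IIn (Or a b)].
Proof.
  unfold_rule. prf_intros.
  apply (entails_or_elim _ a b); [hyp | apply entails_or_l | apply entails_or_r]; ent_intros.
Qed.

Lemma rule_sound_orR1 a b : rule_sound [IOut a] [IOut a] [IOut (Or a b)].
Proof. unfold_rule. prf_intros. apply entails_or_l. hyp_mp Top. apply entails_top. Qed.

Lemma rule_sound_orR2 a b : rule_sound [IOut b] [IOut b] [IOut (Or a b)].
Proof. unfold_rule. prf_intros. apply entails_or_r. hyp_mp Top. apply entails_top. Qed.

Lemma rule_sound_impR a b : rule_sound [IIn a; IOut b] [IIn a; IOut b] [IOut (Imp a b)].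
Proof. unfold_rule. prf_intros. hyp_mp (And Top a). ent_intros. Qed.

Lemma rule_sound_boxR a b : rule_sound [IComp a [IOut b]] [IComp a [IOut b]] [IOut (Box a b)].
Proof.
  unfold_rule. prf_intros. apply (entails_app _ (Box a (Imp Top b))).
  - apply box_mono. prf_intros. hyp_mp Top. apply entails_top.
  - hyp_mp Top. apply entails_top.
Qed.

Lemma rule_sound_diaL a b : rule_sound [IComp a [IIn b]] [IComp a [IIn b]] [IIn (Dia a b)].
Proof.
  unfold_rule. prf_intros. apply entails_or_l. ent_intros.
  apply (entails_app _ (Dia a b)); [apply dia_mono; prf_intros | hyp].
Qed.

Lemma rule_sound_boxL a b e d :
  prf (Imp a e) -> prf (Imp e a) ->
  rule_sound [IIn (Box a b); IComp e (IIn b :: d)] [IIn (Box a b); IComp e (IIn b :: d)]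
             [IIn (Box a b); IComp e d].
Proof.
  intros Hae Hea. pose proof (box_antecedent_equiv a e b Hae Hea) as Hbox.
  pose proof (prf_iff_r _ _ (ante_cons_iff (IIn b) d)) as Hb.
  change (ante [IIn b]) with (And Top b) in Hb.
  change [IIn (Box a b); IComp e (IIn b :: d)] with ([IIn (Box a b)] ++ [IComp e (IIn b :: d)]).
  change [IIn (Box a b); IComp e d] with ([IIn (Box a b)] ++ [IComp e d]).
  assert (Hnd : nout (IIn b :: d) = nout d) by reflexivity.
  unfold rule_sound. rewrite has_out_nout, nout_app, !nout_single, nout_item_comp.
  cbn [nout_item Nat.add]. destruct (Nat.eqb_spec (nout d) 0) as [Hd | Hd]; cbn [negb].
  - prf_intros. apply entails_split_ante_app.
    apply entails_or_l, entails_ante_app; [hyp |]. rewrite !ante_comp_in by lia. ent_intros.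
    apply (entails_app _ (Dia e (And (ante d) b))).
    + apply dia_mono. prf_intros. apply (entails_app _ _ _ Hb). ent_intros.
    + apply (entails_app _ _ _ (CW _ _ _)). ent_intros.
      apply (entails_app _ _ _ Hbox), (entails_and_r _ Top). hyp.
  - rewrite !interp_app_in, !iout_comp_out by (rewrite ?Hnd; reflexivity || lia).
    prf_intros. apply entails_split_ante_app.
    apply (entails_app2 _ (Box e b) (Box e (interp (IIn b :: d)))).
    + apply box_mono2. prf_intros. apply entails_intro.
      hyp_mp (ante (IIn b :: d)). apply (entails_app _ _ _ Hb). ent_intros.
    + apply (entails_app _ _ _ Hbox), (entails_and_r _ Top). hyp.
    + hyp_mp (ante ([IIn (Box a b)] ++ [IComp e (IIn b :: d)])).
      apply entails_ante_app; [hyp |]. rewrite (ante_comp_out e (IIn b :: d)) by lia.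
      apply entails_top.
Qed.

Lemma rule_sound_diaR a b e d :
  prf (Imp a e) -> prf (Imp e a) -> nout d = 0 ->
  rule_sound [IComp e (IOut b :: d)] [IComp e (IOut b :: d)] [IOut (Dia a b); IComp e d].
Proof.
  intros Hae Hea Hd. pose proof (dia_antecedent_equiv e a b Hea Hae) as Hdia.
  assert (Hbd : nout (IOut b :: d) <> 0) by (rewrite nout_cons; cbn [nout_item]; lia).
  unfold rule_sound. rewrite has_out_pos by (rewrite nout_cons; cbn [nout_item]; lia).
  unfold interp.
  rewrite (ante_cons_out (IOut (Dia a b))), (iout_cons_out (IOut (Dia a b))) by reflexivity.
  rewrite (ante_comp_in e d), ante_comp_out, iout_comp_out by assumption.
  prf_intros. apply (entails_app _ _ _ Hdia).
  apply (entails_app _ (Dia e (And (ante d) (interp (IOut b :: d))))).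
  - apply dia_mono. prf_intros. hyp_mp (ante d). hyp.
  - apply (entails_app _ _ _ (CW _ _ _)). ent_intros. hyp_mp Top. apply entails_top.
Qed.

Lemma valid_init p : valid [IIn (Var p); IOut (Var p)].
Proof. unfold valid, interp, ante. cbn. prf_intros. Qed.

Lemma valid_botL : valid [IIn Bot].
Proof. unfold valid, ante. cbn. prf_intros. Qed.

Lemma prf_imp_of_interp a e : prf (interp [IIn a; IOut e]) -> prf (Imp a e).
Proof.
  unfold interp, ante. cbn. intros H. prf_intros. apply (entails_app _ _ _ H). ent_intros.
Qed.

Ltac by_sound_rule HS :=
  refine (prf_interp_fill _ _ _ _ _ _ _ HS _ _); try reflexivity; auto using nout_nested_seq.

Lemma deriv_sound s : deriv s -> nout s = 1 -> prf (interp s).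
Proof.
  induction 1 as [c p _ | c _ | c a b _ N _ IH | c a b _ N1 N2 _ IH1 _ IH2
                 | c a b _ N1 N2 _ IH1 _ IH2 | c a b _ N _ IH | c a b _ N _ IH
                 | c a b _ N1 N2 _ IH1 _ IH2 | c a b _ N _ IH
                 | c a b e d _ N _ IHae _ IHea _ IH | c a b _ N _ IH | c a b _ N _ IH
                 | c a b e d Nc N _ IHae _ IHea _ IH | s t _ IH Hst]; intros Hs.
  - exact (prf_interp_fill_valid _ _ Hs (valid_init p)).
  - exact (prf_interp_fill_valid _ _ Hs valid_botL).
  - by_sound_rule (rule_sound_andL a b).
  - by_sound_rule (rule_sound_andR a b).
  - by_sound_rule (rule_sound_orL a b).
  - by_sound_rule (rule_sound_orR1 a b).
  - by_sound_rule (rule_sound_orR2 a b).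
  - assert (Hc1 : nout_ctx c = 1) by (rewrite nout_fill in Hs; cbn in Hs; lia).
    refine (prf_interp_of_rule_sound _ _ _ _ (impL_sound c a b Hc1) _ _);
      [lia | auto using nout_nested_seq ..].
  - by_sound_rule (rule_sound_impR a b).
  - by_sound_rule (rule_sound_boxL a b e d (prf_imp_of_interp _ _ (IHae eq_refl))
                                            (prf_imp_of_interp _ _ (IHea eq_refl))).
  - by_sound_rule (rule_sound_boxR a b).
  - by_sound_rule (rule_sound_diaL a b).
  - apply nout_nested_seq in Nc.
    rewrite nout_fill, nout_cons, nout_single, nout_item_comp in Nc. cbn [nout_item] in Nc.
    by_sound_rule (rule_sound_diaR a b e d (prf_imp_of_interp _ _ (IHae eq_refl))
                                            (prf_imp_of_interp _ _ (IHea eq_refl)) ltac:(lia)).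
  - destruct (interp_equiv_of_sequiv s t Hst) as (Hn & _).
    apply (prf_interp_sequiv s t Hst); [lia | apply IH; lia].
Qed.

Theorem theorem1 : forall s : seq, nested_seq s -> deriv s -> prf (interp s).
Proof. intros s Hn Hd. exact (deriv_sound s Hd (nout_nested_seq s Hn)). Qed.
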